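(* Suppose $A\subseteq\mathbb Z_m$ with $d<|A|<m$, and let $G_d$ be the set of $x\in\mathbb Z_m$ such that $|(A+x)\cup A|\le|A|+d$. Then $|G_d|\le\frac{|A|^2}{|A|-d}$.
   Context: $A+x=\{a+x:a\in A\}$ in the cyclic group $\mathbb Z_m$. *)

From mathcomp Require Import all_boot all_order all_algebra.
Set Implicit Arguments. Unset Strict Implicit. Unset Printing Implicit Defensive.
Import GRing.Theory Num.Theory.

Definition shift_set (m : nat) (A : {set 'Z_m}) (x : 'Z_m) : {set 'Z_m} :=
  [set (a + x)%R | a in A].

Definition Gd (m : nat) (A : {set 'Z_m}) (d : nat) : {set 'Z_m} :=
  [set x : 'Z_m | #|shift_set A x :|: A| <= #|A| + d].

(* Double counting: summing |(A + x) ∩ A| over all x counts the pairs (y, x)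
   with y ∈ A and y - x ∈ A, which gives |A|^2.  Each x ∈ G_d contributes at
   least |A| - d to this sum, since |(A + x) ∩ A| = 2|A| - |(A + x) ∪ A|. *)

From mathcomp Require Import all_boot all_order all_algebra.
Import GRing.Theory Num.Theory.

Lemma card_setI_sum (T : finType) (A B : {set T}) :
  #|A :&: B| = \sum_(y in A) (y \in B).
Proof.
rewrite -sum1_card (eq_bigl (fun y => (y \in A) && (y \in B))) => [|y].
  by rewrite big_mkcondr /=; apply: eq_bigr => y _; case: (y \in B).
by rewrite inE.
Qed.

Section Translates.

Variables (V : finZmodType) (A : {set V}).

Lemma mem_translate (x y : V) :
  (y \in [set a + x | a in A]%R) = (y - x \in A)%R.
Proof.
apply/imsetP/idP => [[a aA ->]|yxA]; first by rewrite addrK.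
by exists (y - x)%R; rewrite ?subrK.
Qed.

Lemma card_translate (x : V) : #|[set a + x | a in A]%R| = #|A|.
Proof. exact/card_imset/addIr. Qed.

Lemma sum_card_translateI :
  \sum_(x : V) #|[set a + x | a in A]%R :&: A| = #|A| ^ 2.
Proof.
under eq_bigr do rewrite setIC card_setI_sum.
rewrite exchange_big /= -mulnn -sum_nat_const; apply: eq_bigr => y _.
under eq_bigr do rewrite mem_translate.
rewrite (reindex_inj (subrI y)) /=.
under eq_bigr do rewrite subKr.
by rewrite -sum1_card [RHS]big_mkcond; apply: eq_bigr => x _; case: (x \in A).
Qed.

Lemma card_translate_overlap (S : {set V}) (k : nat) :
    {in S, forall x, k <= #|[set a + x | a in A]%R :&: A|} ->
  #|S| * k <= #|A| ^ 2.
Proof.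
move=> overlapS; rewrite -sum_card_translateI -sum_nat_const.
rewrite [leqRHS](bigID (mem S)) /=.
by apply: leq_trans (leq_addr _ _); apply: leq_sum.
Qed.

End Translates.

Lemma Gd_overlap (m : nat) (A : {set 'Z_m}) (d : nat) :
  {in Gd A d, forall x, #|A| - d <= #|shift_set A x :&: A|}.
Proof.
move=> x; rewrite inE cardsI card_translate => small_union.
by apply: leq_trans (leq_sub2l _ small_union); rewrite subnDl.
Qed.

Theorem lemma2p6 (m : nat) (hm : 1 < m) (A : {set 'Z_m}) (d : nat)
    (hdA : d < #|A|) (hAm : #|A| < m) :
  ((#|Gd A d|)%:R <= ((#|A| ^ 2)%:R / (#|A|%:R - d%:R) : rat))%R.
Proof.
have count_bound : #|Gd A d| * (#|A| - d) <= #|A| ^ 2.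
  exact/card_translate_overlap/Gd_overlap.
have gap_pos : (0 < #|A|%:R - d%:R :> rat)%R by rewrite subr_gt0 ltr_nat.
by rewrite ler_pdivlMr // -natrB ?(ltnW hdA) // -natrM ler_nat.
Qed.
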